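(* Let $A$ be a finite alphabet with $k=|A|$, let $L\subseteq A^*$ be $n$-PT, and let $m=f_k(n)$. For every $u\in L$ there is a D-product $P_u$ of length $\ell\leq mk+m+k$ such that $u\in P_u\subseteq L$.
   Context: A D-product is a regular expression $E_1E_2\cdots E_\ell$ where each $E_i$ is either $B^*$ for a subalphabet $B\subseteq A$ or a single letter $a\in A$; $\ell$ is its length, and it also denotes its language. $u\sim_n v$ iff $u,v$ have the same (scattered) subwords of length at most $n$; $L$ is $n$-PT if it is a union of $\sim_n$-classes. The functions $f_k$ ($k\geq1$) are defined by $f_1(n)=n$ and $f_{k+1}(n)=\max_{0\leq m\leq n}\bigl(m f_k(n+1-m)+m+f_k(n-m)\bigr)$. *)

From mathcomp Require Import all_boot.
Set Implicit Arguments. Unset Strict Implicit. Unset Printing Implicit Defensive.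

Definition simn (A : finType) (n : nat) (u v : seq A) : Prop :=
  forall w : seq A, size w <= n -> subseq w u = subseq w v.

Definition nPT (A : finType) (n : nat) (L : seq A -> Prop) : Prop :=
  forall u v : seq A, simn n u v -> (L u <-> L v).

Inductive ditem (A : finType) : Type :=
  | DStar of {set A}
  | DLetter of A.

Fixpoint dlang (A : finType) (P : seq (ditem A)) (w : seq A) : Prop :=
  match P with
  | [::] => w = [::]
  | DStar B :: P' =>
      exists w1 w2, [/\ w = w1 ++ w2, all (fun x => x \in B) w1 & dlang P' w2]
  | DLetter a :: P' =>
      exists w2, w = a :: w2 /\ dlang P' w2
  end.

(* f_1(n) = n, f_{k+1}(n) = max_{0<=m<=n} (m f_k(n+1-m) + m + f_k(n-m)).
   f 0 is not used (set to n arbitrarily). *)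
Fixpoint fk (k n : nat) {struct k} : nat :=
  match k with
  | 0 => n
  | k'.+1 =>
      if k' is 0 then n
      else \max_(m < n.+1) (m * fk k' (n.+1 - m) + m + fk k' (n - m))
  end.

From mathcomp Require Import all_boot zify.

(* Induction on the number j of letters of u.  If u uses exactly the letters of
   B, |B| = j + 1, cut it as u = v_1 b_1 ... v_m b_m u_0, where v_i b_i is the
   shortest prefix of the remainder containing all of B, so that v_i misses b_i.
   Keeping the b_i as letters, replacing each v_i by a D-product of precision
   n - m + 1 over a smaller alphabet and u_0 by one of precision n - m (or by B^*
   once m = n) gives a D-product whose words w = x_1 b_1 ... x_m b_m w_0 have the
   same block shape.  A subword of u of length at most n either has at least
   n - m + 1 letters in v_1, which transfer to x_1 while the at most m - 1 other
   letters fit into the complete blocks x_i b_i, i >= 2; or it has fewer, and then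
   transfers to x_1 b_1 and recursively to the rest.  Counting letters gives the
   recursion m f_j(n + 1 - m) + m + f_j(n - m) defining f_(j+1)(n). *)

Set Implicit Arguments. Unset Strict Implicit. Unset Printing Implicit Defensive.

Section Subwords.
Variable A : finType.
Implicit Types (s u v x y p q : seq A).

Lemma subseq_catP s x y : subseq s (x ++ y) ->
  exists p q, [/\ s = p ++ q, subseq p x & subseq q y].
Proof.
elim: x s => [|a x IHx] s /=.
  by move=> sy; exists [::], s.
case: s => [|c s] /=; first by exists [::], [::]; rewrite sub0seq.
case: eqP => [->|_] /IHx [p [q [-> px qy]]].
  by exists (a :: p), q; rewrite /= eqxx.
by exists p, q; split=> //; apply: subseq_trans px (subseq_cons _ _).
Qed.

Lemma subseq_cat_consP s x b y : s != [::] -> {subset s <= b :: x} ->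
  subseq s (x ++ b :: y) ->
  exists p q, [/\ subseq p x, subseq q y, size q < size s
                & s = p ++ b :: q \/ s = p ++ q].
Proof.
move=> s_nil s_bx /subseq_catP [p [[|c q] [s_pq px]]] /=; subst s.
  exists p, [::]; rewrite cats0 in s_nil *.
  by rewrite sub0seq lt0n size_eq0 s_nil; split=> //; right.
case: (c =P b) => [-> | /eqP/negbTE cb] /=; rewrite ?eqxx ?cb => qy.
  by exists p, q; rewrite size_cat /=; split=> //; [lia | left].
case: p px s_bx {s_nil} => [|a p] px s_bx.
  have cx : c \in x by move: (s_bx c); rewrite mem_head inE cb => /(_ isT).
  by exists [:: c], q; rewrite sub1seq cx (cons_subseq qy); split=> //; right.
by exists (a :: p), (c :: q); rewrite size_cat /=; split=> //; [lia | right].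
Qed.

Lemma simn_sym n u v : simn n u v -> simn n v u.
Proof. by move=> uv s /uv. Qed.

End Subwords.

Section BlockSimilarity.
Variable A : finType.
Implicit Types (B : {set A}) (s u v w x y : seq A).

(* [blocksim B n m u w]: [u = v_1 b_1 ... v_m b_m u_0] and
   [w = x_1 b_1 ... x_m b_m w_0], where every [v_i b_i] and every [x_i b_i]
   contains all letters of [B], [v_i ~_(n-m+1) x_i] and [u_0 ~_(n-m) w_0]. *)
Inductive blocksim B : nat -> nat -> seq A -> seq A -> Prop :=
| Blocksim0 n u w : simn n u w -> blocksim B n 0 u w
| BlocksimS n m v x b u w : blocksim B n m u w -> simn (n.+1 - m) v x ->
    {subset B <= b :: v} -> {subset B <= b :: x} ->
    blocksim B n.+1 m.+1 (v ++ b :: u) (x ++ b :: w).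

Lemma blocksim_sym B n m u w : blocksim B n m u w -> blocksim B n m w u.
Proof.
elim=> {n m u w} [n u w /simn_sym|n m v x b u w _ wu /simn_sym xv Bv Bx].
  exact: Blocksim0.
exact: BlocksimS.
Qed.

Lemma blocksim_full B n m u w : blocksim B n m u w ->
  forall s, size s <= m -> {subset s <= B} -> subseq s w.
Proof.
elim=> {n m u w} [n u w _|n m v x b u w _ IHw _ _ Bx] [|c s] //=;
  rewrite ?sub0seq // ltnS => sm cs_B.
have cB : c \in B by apply: cs_B; rewrite mem_head.
have sw : subseq s w by apply: IHw => // z zs; apply: cs_B; rewrite inE zs orbT.
have := Bx c cB; rewrite inE => /orP[/eqP->|cx].
  by rewrite -[b :: s]cat0s cat_subseq ?sub0seq //= eqxx.
by rewrite -cat1s cat_subseq ?sub1seq // (subseq_trans sw (subseq_cons _ _)).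
Qed.

Lemma blocksim_subseq B n m u w : blocksim B n m u w -> m <= n ->
  forall s, size s <= n -> {subset s <= B} -> subseq s u -> subseq s w.
Proof.
elim=> {n m u w} [n u w uw _ s sn _|n m v x b u w uw IHw vx Bv _ mn s].
  by rewrite (uw s sn).
rewrite ltnS in mn; move=> sn sB.
have [-> _ | s_nil] := eqVneq s [::]; first exact: sub0seq.
have s_bv : {subset s <= b :: v} by move=> z /sB /Bv.
move=> /(subseq_cat_consP s_nil s_bv) [p [q [pv qu qs s_pq]]].
have [r s_pr] : exists r, s = p ++ r.
  by case: s_pq => ->; [exists (b :: q) | exists q].
have q_s : {subset q <= s}.
  by case: s_pq => -> z zq; rewrite mem_cat ?inE zq !orbT.
have [k_p | p_k] := leqP (n.+1 - m) (size p).
  rewrite -(cat_take_drop (n.+1 - m) s) cat_subseq //.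
    rewrite -vx ?size_take_min; last by lia.
    by rewrite s_pr takel_cat // (subseq_trans (take_subseq _ _) pv).
  apply: subseq_trans (subseq_cons _ b).
  apply: (blocksim_full uw); first by rewrite size_drop; lia.
  by move=> z /mem_drop /sB.
have px : subseq p x by rewrite -vx //; lia.
have qw : subseq q w by apply: IHw => //; [lia | move=> z /q_s /sB].
case: s_pq => ->; rewrite cat_subseq //= ?eqxx //.
exact: subseq_trans qw (subseq_cons _ _).
Qed.

Lemma blocksim_simn B n m u w : blocksim B n m u w -> m <= n ->
  {subset u <= B} -> {subset w <= B} -> simn n u w.
Proof.
move=> uw mn uB wB s sn; apply/idP/idP => ss.
  by apply: (blocksim_subseq uw mn sn _ ss) => z /(mem_subseq ss) /uB.
by apply: (blocksim_subseq (blocksim_sym uw) mn sn _ ss) => z /(mem_subseq ss) /wB.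
Qed.

Lemma blocksim_cons B n m v b u x w : m <= n -> {subset B <= b :: v} ->
  simn (n.+1 - m) x v -> blocksim B n m u w ->
  blocksim B n.+1 m.+1 (v ++ b :: u) (x ++ b :: w).
Proof.
move=> mn Bv xv uw; apply: BlocksimS => //; first exact: simn_sym.
move=> z /Bv; rewrite !inE => /orP[-> // | zv]; apply/orP; right.
by rewrite -sub1seq (xv [:: z]) ?sub1seq //=; lia.
Qed.

End BlockSimilarity.

Section DProducts.
Variable A : finType.
Implicit Types (B : {set A}) (u v w x y : seq A) (P : seq (ditem A)).

Lemma dlang_catP P1 P2 w :
  dlang (P1 ++ P2) w <-> exists x y, [/\ w = x ++ y, dlang P1 x & dlang P2 y].
Proof.
elim: P1 w => [|[B|a] P1 IHP] w /=.
- by split=> [|[x [y [-> -> ?]]]] //; exists [::], w.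
- split=> [[w1 [w2 [-> ? /IHP [x [y [-> ? ?]]]]]] |
           [x [y [-> [w1 [w2 [-> ? ?]]] ?]]]].
    by exists (w1 ++ x), y; split; rewrite ?catA //; exists w1, x.
  by exists w1, (w2 ++ y); rewrite catA; split=> //; apply/IHP; exists w2, y.
- split=> [[w2 [-> /IHP [x [y [-> ? ?]]]]] | [x [y [-> [w2 [-> ?]] ?]]]].
    by exists (a :: x), y; split=> //; exists x.
  by exists (w2 ++ y); split=> //; apply/IHP; exists w2, y.
Qed.

Lemma dlang_star B w : dlang [:: DStar B] w <-> {subset w <= B}.
Proof.
split=> [[w1 [w2 [-> /allP w1B ->]]] | wB]; first by rewrite cats0.
by exists w, [::]; rewrite cats0; split=> //; apply/allP.
Qed.

Definition nletters P := count (fun d => if d is DLetter _ then true else false) P.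

Lemma covering_prefix B u : B != set0 -> {subset B <= u} ->
  exists v b u', [/\ u = v ++ b :: u', b \in B, b \notin v & {subset B <= b :: v}].
Proof.
move=> /set0Pn [y yB]; elim/last_ind: u => [|u x IHu] Bu; first by have := Bu y yB.
have [Bu' | /forallPn [z]] := boolP [forall z, (z \in B) ==> (z \in u)].
  have [v [b [u' [-> bB bv Bv]]]] := IHu (fun z zB => implyP (forallP Bu' z) zB).
  by exists v, b, (rcons u' x); rewrite rcons_cat.
rewrite negb_imply => /andP [zB zu].
have := Bu z zB; rewrite mem_rcons inE (negbTE zu) orbF => /eqP zx; subst z.
exists u, x, [::]; rewrite cats1; split=> // t /Bu; by rewrite mem_rcons.
Qed.

End DProducts.

(* The recursion of [fk] started from f_0 = 0 rather than f_1 = n: the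
   induction on the alphabet size then needs no special first step. *)
Fixpoint fk0 (k n : nat) : nat :=
  if k is k'.+1 then \max_(m < n.+1) (m * fk0 k' (n.+1 - m) + m + fk0 k' (n - m))
  else 0.

Lemma leq_fk0S k n m : m <= n ->
  m * fk0 k (n.+1 - m) + m + fk0 k (n - m) <= fk0 k.+1 n.
Proof. by rewrite -ltnS => mn; apply: (leq_bigmax_cond (Ordinal mn)). Qed.

Lemma fk0_le_fk k n : fk0 k n <= fk k n.
Proof.
elim: k n => [//|[|k] IHk] n; apply/bigmax_leqP => m _.
  by rewrite muln0 !addn0 -ltnS add0n; apply: ltn_ord.
apply: leq_trans (leq_bigmax m).
apply: leq_add; last exact: IHk.
by apply: leq_add => //; apply: leq_mul => //; apply: IHk.
Qed.

Section Approximation.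
Variable A : finType.
Implicit Types (B : {set A}) (u v w : seq A) (P : seq (ditem A)).

Definition dproduct_approx j := forall n u, #|[set x in u]| <= j -> exists P,
  [/\ dlang P u, nletters P <= fk0 j n, size P <= nletters P * j.+1 + j
    & forall w, dlang P w -> simn n w u /\ {subset w <= u}].

Section Step.
Variable j : nat.
Hypothesis approx_j : dproduct_approx j.

Lemma blocksim_dproduct B : #|B| <= j.+1 -> forall n u, {subset u <= B} ->
  exists P m, [/\ dlang P u, m <= n,
    nletters P <= m * fk0 j (n.+1 - m) + m + fk0 j (n - m),
    size P <= nletters P * j.+2 + j.+1
  & forall w, dlang P w -> blocksim B n m u w /\ {subset w <= B}].
Proof.
move=> Bj n u; have [N] := ubnP (size u); elim: N => // N IHN in n u *.
move=> uN uB; have [uj | ju] := leqP #|[set x in u]| j.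
  have [P [Pu Pl Ps Pw]] := approx_j n uj.
  exists P, 0; split=> //; [by rewrite mul0n subn0 | nia |].
  move=> w /Pw [wu wsub]; split; first exact/Blocksim0/simn_sym.
  by move=> z /wsub /uB.
case: n => [|n].
  exists [:: DStar B], 0; split=> //; first exact/dlang_star.
  move=> w /dlang_star wB; split=> //; apply: Blocksim0 => s.
  by rewrite leqn0 => /nilP ->; rewrite !sub0seq.
have alph_u : [set x in u] = B.
  apply/eqP; rewrite eqEcard; apply/andP; split; last lia.
  by apply/subsetP => x; rewrite inE => /uB.
have B0 : B != set0 by rewrite -card_gt0 -alph_u; lia.
have Bu : {subset B <= u} by move=> z; rewrite -alph_u inE.
have [v [b [u' [u_eq bB bv Bv]]]] := covering_prefix B0 Bu.
have u'N : size u' < N by move: uN; rewrite u_eq size_cat /=; lia.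
have u'B : {subset u' <= B}.
  by move=> z zu'; apply: uB; rewrite u_eq mem_cat inE zu' !orbT.
have [P' [m [P'u' mn P'l P's P'w]]] := IHN n u' u'N u'B.
have vj : #|[set x in v]| <= j.
  suff /subset_leq_card : [set x in v] \subset B :\ b.
    by rewrite (cardsD1 b B) bB in Bj; lia.
  apply/subsetP => z; rewrite !inE => zv; rewrite uB ?u_eq ?mem_cat ?zv // andbT.
  by apply: contraNneq bv => <-.
have [Pv [Pvv Pvl Pvs Pvw]] := approx_j (n.+1 - m) vj.
exists (Pv ++ DLetter b :: P'), m.+1.
rewrite /nletters count_cat /= -/(nletters Pv) -/(nletters P') size_cat /= !subSS.
split=> //; [|nia|nia|].
  by rewrite u_eq; apply/dlang_catP; exists v, (b :: u'); split=> //; exists u'.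
move=> w /dlang_catP [x [_ [-> /Pvw [xv xv_sub] [y [-> /P'w [u'y yB]]]]]].
split; first by rewrite u_eq; apply: blocksim_cons.
move=> z; rewrite mem_cat inE => /or3P [/xv_sub zv | /eqP -> | /yB] //.
by apply: uB; rewrite u_eq mem_cat zv.
Qed.

End Step.

Lemma dproduct_approx_all j : dproduct_approx j.
Proof.
elim: j => [|j IHj] n u.
  case: u => [_|a u].
    by exists [::]; split=> // w /= ->.
  by rewrite leqn0 => /eqP/cards0_eq/setP/(_ a); rewrite !inE eqxx.
move=> uj; have uB : {subset u <= [set x in u]} by move=> z; rewrite inE.
have [P [m [Pu mn Pl Ps Pw]]] := blocksim_dproduct IHj uj n uB.
exists P; split=> //; first exact: leq_trans Pl (leq_fk0S j mn).
move=> w /Pw [uw wB]; split; last by move=> z /wB; rewrite inE.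
exact/simn_sym/(blocksim_simn uw).
Qed.

End Approximation.

Theorem lemma19 (A : finType) (n : nat) (L : seq A -> Prop) :
  0 < #|A| -> nPT n L ->
  forall u : seq A, L u ->
  exists P : seq (ditem A),
    [/\ size P <= fk #|A| n * #|A| + fk #|A| n + #|A|,
        dlang P u
      & forall w : seq A, dlang P w -> L w].
Proof.
move=> _ L_PT u Lu.
have [P [Pu Pl Ps Pw]] := @dproduct_approx_all A #|A| n u (max_card _).
exists P; split=> //; first by have := fk0_le_fk #|A| n; nia.
by move=> w /Pw [wu _]; apply: (L_PT w u wu).2.
Qed.
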